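(* Let $\mathfrak g$ be a complex Lie algebra and $A_0,A_1\in\mathfrak g$. Put $G_1=\frac14[A_1,A_0]$ and define elements $A_m$ ($m\in\mathbb Z$) recursively (in both directions) by $A_{m-1}-A_{m+1}=\frac12[A_m,G_1]$, and then $G_m=\frac14[A_m,A_0]$ for all $m\in\mathbb Z$. The following are equivalent: (I) (Dolan–Grady condition) $[A_1,[A_1,[A_1,A_0]]]=16[A_1,A_0]$ and $[A_0,[A_0,[A_0,A_1]]]=16[A_0,A_1]$; (II) for all $m,l\in\mathbb Z$: $[A_m,A_l]=4G_{m-l}$, $[A_m,G_l]=2A_{m-l}-2A_{m+l}$, $[G_m,G_l]=0$.
   Context: All Lie algebras are over $\mathbb C$. *)

From mathcomp Require Import all_boot all_order all_algebra.
From mathcomp Require Import reals.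
From mathcomp.real_closed Require Import complex.
Set Implicit Arguments. Unset Strict Implicit. Unset Printing Implicit Defensive.
Import GRing.Theory Num.Theory.
Local Open Scope ring_scope.

Definition lie_bracket (K : fieldType) (V : lmodType K) (br : V -> V -> V) : Prop :=
  [/\ (forall (a : K) (x y z : V), br (a *: x + y) z = a *: br x z + br y z),
      (forall (a : K) (x y z : V), br x (a *: y + z) = a *: br x y + br x z),
      (forall x : V, br x x = 0)
    & (forall x y z : V, br x (br y z) + br y (br z x) + br z (br x y) = 0)].

From mathcomp Require Import all_boot all_order all_algebra ring zify.
From mathcomp Require Import reals.
From mathcomp.real_closed Require Import complex.
Import GRing.Theory Num.Theory.
Local Open Scope ring_scope.

(* Condition (I) says that ad A_1 and ad A_0 both act on G_1 with square 16.
   The recursion carries such a pair (A_(m+1), A_m) with [A_(m+1), A_m] = 4 G_1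
   to (A_(m+2), A_(m+1)), and likewise downwards, because one recursion step is
   a reflection preserving these relations; hence [A_(m+1), A_m] = 4 G_1 for
   every m.  An induction on d then shows that [A_(m+d), A_m] does not depend
   on m, the Jacobi identity supplying [G_1, G_d] = 0 on the way (this uses
   characteristic 0), and yields the action of the A_j on the G_l; [G_m, G_l] = 0
   follows from one more Jacobi identity.  The converse is a direct computation. *)

Inductive lexpr (K : Type) : Type :=
  | LAtom of nat
  | LAdd of lexpr K & lexpr K
  | LOpp of lexpr K
  | LScale of K & lexpr K
  | LZero.
Arguments LZero {K}.

Fixpoint lexpr_eval {K : pzRingType} {V : lmodType K} (env : seq V) (e : lexpr K) : V :=
  match e with
  | LAtom n => nth 0 env n
  | LAdd a b => lexpr_eval env a + lexpr_eval env b
  | LOpp a => - lexpr_eval env a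
  | LScale k a => k *: lexpr_eval env a
  | LZero => 0
  end.

Fixpoint lexpr_coef {K : pzRingType} (e : lexpr K) (n : nat) : K :=
  match e with
  | LAtom m => if Nat.eqb m n then 1 else 0
  | LAdd a b => lexpr_coef a n + lexpr_coef b n
  | LOpp a => - lexpr_coef a n
  | LScale k a => k * lexpr_coef a n
  | LZero => 0
  end.

Lemma lexpr_evalE (K : pzRingType) (V : lmodType K) (env : seq V) (e : lexpr K) :
  lexpr_eval env e = \sum_(i < size env) lexpr_coef e i *: env`_i.
Proof.
elim: e => [n|a IHa b IHb|a IHa|k a IHa|] /=.
- case: (ltnP n (size env)) => [n_lt|n_ge].
    rewrite (bigD1 (Ordinal n_lt)) //= PeanoNat.Nat.eqb_refl scale1r big1 ?addr0 //.
    move=> i /eqP i_neq; case: PeanoNat.Nat.eqb_spec => [ni|_]; last by rewrite scale0r.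
    by case: i_neq; apply: val_inj.
  rewrite nth_default // big1 // => i _.
  case: PeanoNat.Nat.eqb_spec => [ni|_]; last by rewrite scale0r.
  by have := ltn_ord i; rewrite -ni ltnNge n_ge.
- by rewrite IHa IHb -big_split; apply: eq_bigr => i _; rewrite scalerDl.
- by rewrite IHa -sumrN; apply: eq_bigr => i _; rewrite scaleNr.
- by rewrite IHa scaler_sumr; apply: eq_bigr => i _; rewrite scalerA.
- by rewrite big1 // => i _; rewrite scale0r.
Qed.

(* An explicit conjunction, so that the tactic below can split it into goals. *)
Fixpoint all_below (n : nat) (P : nat -> Prop) : Prop :=
  if n is k.+1 then all_below k P /\ P k else True.

Lemma all_belowP {n P} : all_below n P -> forall i, (i < n)%N -> P i.
Proof.
elim: n => [|n IH] //= [Pbelow Pn] i; rewrite ltnS leq_eqVlt => /orP[/eqP->//|].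
exact: IH.
Qed.

Lemma lexpr_eval_eq (K : pzRingType) (V : lmodType K) (env : seq V) (e1 e2 : lexpr K) :
  all_below (size env) (fun i => lexpr_coef e1 i = lexpr_coef e2 i) ->
  lexpr_eval env e1 = lexpr_eval env e2.
Proof.
move=> coefE; rewrite !lexpr_evalE; apply: eq_bigr => i _.
by rewrite (all_belowP coefE i (ltn_ord i)).
Qed.

Ltac lexpr_index t env :=
  lazymatch env with
  | nil => constr:(@None nat)
  | (?h :: ?tl) =>
      let b := constr:(ltac:(tryif unify h t then exact true else exact false)) in
      lazymatch b with
      | true => constr:(Some 0%N)
      | false =>
          let r := lexpr_index t tl in
          lazymatch r with
          | Some ?k => constr:(Some (S k))
          | None => constr:(@None nat)
          end
      end
  end.

Ltac lexpr_reify K env t :=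
  lazymatch t with
  | @GRing.add _ ?a ?b =>
      let p := lexpr_reify K env a in
      lazymatch p with (?env1, ?ea) =>
        let q := lexpr_reify K env1 b in
        lazymatch q with (?env2, ?eb) => constr:((env2, @LAdd K ea eb)) end end
  | @GRing.opp _ ?a =>
      let p := lexpr_reify K env a in
      lazymatch p with (?env1, ?ea) => constr:((env1, @LOpp K ea)) end
  | @GRing.scale _ _ ?k ?a =>
      let p := lexpr_reify K env a in
      lazymatch p with (?env1, ?ea) => constr:((env1, @LScale K k ea)) end
  | @GRing.zero _ => constr:((env, @LZero K))
  | _ =>
      let r := lexpr_index t env in
      lazymatch r with
      | Some ?k => constr:((env, @LAtom K k))
      | None =>
          let n := eval compute in (size env) in
          let env' := eval cbn [cat] in (env ++ [:: t]) in
          constr:((env', @LAtom K n))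
      end
  end.

(* Proves an equation between K-linear combinations of arbitrary vectors by
   comparing coefficients; these are closed by [field]. *)
Ltac lmod_eq K :=
  lazymatch goal with
  | |- ?l = ?r =>
      let V := type of l in
      let p := lexpr_reify K (@nil V) l in
      lazymatch p with (?env1, ?el) =>
        let q := lexpr_reify K env1 r in
        lazymatch q with (?env2, ?er) =>
          change (lexpr_eval env2 el = lexpr_eval env2 er); apply: lexpr_eval_eq;
          cbn [all_below lexpr_coef size Nat.eqb]; repeat split; field; try done
        end end
  end.

Lemma eq_lincomb {K : pzRingType} {V : lmodType K} {p q : V} (c : K) {l r : V} :
  p = q -> l - r = c *: (p - q) -> l = r.
Proof. by move=> pq lrE; apply/eqP; rewrite -subr_eq0 lrE pq subrr scaler0. Qed.

Lemma scale_natr_eq0 (K : numFieldType) (V : lmodType K) (n : nat) (v : V) :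
  n.+1%:R *: v = 0 -> v = 0.
Proof. by move/eqP; rewrite scaler_eq0 pnatr_eq0 => /eqP. Qed.

Lemma int_ind_succ_pred (P : int -> Prop) :
  P 0 -> (forall m, P m -> P (m + 1)) -> (forall m, P m -> P (m - 1)) ->
  forall m, P m.
Proof.
move=> P0 PS PP; elim/int_rect => // n Pn.
  by rewrite -addn1 PoszD; apply: PS.
by rewrite -addn1 PoszD opprD; apply: PP.
Qed.

Lemma int_seq_const (T : Type) (f : int -> T) :
  (forall m, f (m + 1) = f m) -> forall m, f m = f 0.
Proof.
move=> fS; apply: int_ind_succ_pred => // m fm; first by rewrite fS.
by rewrite -fm -{2}(subrK 1 m) fS.
Qed.

Lemma int_seq_shift_neg (Z : zmodType) (f : int -> Z) (c : Z) :
  (forall m, f (m + 1) = f m + c) -> forall n : nat, f 0 = f (- n%:Z) + c *+ n.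
Proof.
move=> fS; elim=> [|n IH]; first by rewrite oppr0 addr0.
rewrite IH (_ : - n%:Z = - n.+1%:Z + 1); last by lia.
by rewrite fS mulrS addrA.
Qed.

Section LieAlgebra.
Context {K : numFieldType} {V : lmodType K} {br : V -> V -> V}.
Hypothesis Hbr : lie_bracket br.

Lemma brDl x y z : br (x + y) z = br x z + br y z.
Proof. by case: Hbr => linl _ _ _; rewrite -{1}[x]scale1r linl scale1r. Qed.

Lemma brDr x y z : br x (y + z) = br x y + br x z.
Proof. by case: Hbr => _ linr _ _; rewrite -{1}[y]scale1r linr scale1r. Qed.

Lemma br0l z : br 0 z = 0.
Proof. by apply: (@addrI _ (br 0 z)); rewrite -brDl !addr0. Qed.

Lemma br0r z : br z 0 = 0.
Proof. by apply: (@addrI _ (br z 0)); rewrite -brDr !addr0. Qed.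

Lemma brZl a x z : br (a *: x) z = a *: br x z.
Proof. by case: Hbr => linl _ _ _; rewrite -[a *: x]addr0 linl br0l addr0. Qed.

Lemma brZr a x z : br z (a *: x) = a *: br z x.
Proof. by case: Hbr => _ linr _ _; rewrite -[a *: x]addr0 linr br0r addr0. Qed.

Lemma brNl x z : br (- x) z = - br x z.
Proof. by rewrite -scaleN1r brZl scaleN1r. Qed.

Lemma brNr x z : br z (- x) = - br z x.
Proof. by rewrite -scaleN1r brZr scaleN1r. Qed.

Lemma brxx x : br x x = 0.
Proof. by case: Hbr. Qed.

Lemma brC x y : br x y = - br y x.
Proof.
apply/eqP; rewrite -addr_eq0; apply/eqP.
by have := brxx (x + y); rewrite brDl !brDr !brxx add0r addr0.
Qed.

Lemma br_derivation x y z : br x (br y z) = br (br x y) z + br y (br x z).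
Proof.
case: Hbr => _ _ _ jacobi; have := jacobi x y z.
rewrite (brC z x) (brC z (br x y)) brNr => J.
by apply/eqP; rewrite -subr_eq0 -J; apply/eqP; lmod_eq K.
Qed.

Ltac br_expand :=
  repeat (first [ rewrite brDl | rewrite brDr | rewrite brNl | rewrite brNr
                | rewrite brZl | rewrite brZr | rewrite br0l | rewrite br0r ]).

(* Computes [br b] of a bracket expression from the given values of [br b]
   on its atoms. *)
Ltac ad_expand b hs :=
  repeat progress (br_expand; rewrite ?(br_derivation b) ?hs ?brxx).

Definition DG_triple (b a x : V) :=
  [/\ br b a = 4 *: x, br a (br a x) = 16 *: x & br b (br b x) = 16 *: x].

Lemma DG_tripleN b a x : DG_triple b a x -> DG_triple a b (- x).
Proof.
case=> ba aax bbx; split.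
- by rewrite brC ba scalerN.
- by rewrite !brNr bbx scalerN.
- by rewrite !brNr aax scalerN.
Qed.

(* The hypothesis reads Z + W = 0 and the goal W - Z = 0.  As Z = - W, [ad b]^2
   acts on Z by 16, but it maps Z to 32 U with [ad b]^2 U = 64 U. *)
Lemma DG_reflect {b a0 P x} :
  br b a0 = 0 -> br b P = 4 *: x -> br b x = 4 *: P ->
  br (a0 + P) (br (a0 + P) x) = 16 *: x ->
  br (a0 - P) (br (a0 - P) x) = 16 *: x.
Proof.
move=> ba0 bP bx hplus.
pose Z := br a0 (br P x) + br P (br a0 x).
pose W := br a0 (br a0 x) + br P (br P x) - 16 *: x.
pose Y := br x (br a0 x) + br P (br a0 P).
pose U := br P (br a0 x) + br x (br a0 P).
have ZW : Z = - W.
  by apply: (eq_lincomb 1 hplus); rewrite /Z /W; br_expand; lmod_eq K.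
have adZ : br b Z = 4 *: Y by rewrite /Z /Y; ad_expand b (ba0, bP, bx); lmod_eq K.
have adY : br b Y = 8 *: U by rewrite /Y /U; ad_expand b (ba0, bP, bx); lmod_eq K.
have adU : br b U = 8 *: Y by rewrite /Y /U; ad_expand b (ba0, bP, bx); lmod_eq K.
pose W1 := 4 *: (br a0 (br a0 P) + br x (br P x)) - 64 *: P.
have adW : br b W = W1 by rewrite /W /W1; ad_expand b (ba0, bP, bx); lmod_eq K.
have adW1 : br b W1 = 16 *: W by rewrite /W /W1; ad_expand b (ba0, bP, bx); lmod_eq K.
have ad2Z : br b (br b Z) = 32 *: U by rewrite adZ brZr adY; lmod_eq K.
have ad2U : br b (br b U) = 64 *: U by rewrite adU brZr adY; lmod_eq K.
have ad2Z' : br b (br b Z) = 16 *: Z by rewrite ZW !brNr adW adW1; lmod_eq K.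
have ZU : Z = 2 *: U.
  by apply: (eq_lincomb (-1/16) ad2Z'); rewrite ad2Z; lmod_eq K.
have U0 : U = 0.
  apply: (@scale_natr_eq0 _ _ 95); change ((96 : K) *: U = 0).
  apply: (eq_lincomb 1 ad2Z).
  by rewrite ZU !brZr ad2U; lmod_eq K.
have Z0 : Z = 0 by rewrite ZU U0 scaler0.
have W0 : W = 0 by apply/eqP; rewrite -oppr_eq0 -ZW Z0.
have -> : br (a0 - P) (br (a0 - P) x) = W + 16 *: x - Z.
  by rewrite /W /Z; br_expand; lmod_eq K.
by rewrite W0 Z0 add0r subr0.
Qed.

(* With [P := 1/4 [b, x]] and [a0 := a - P], [ad b] kills [a0] and swaps [x]
   and [P] up to a factor 4; the step turns [a = a0 + P] into [a0 - P]. *)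
Lemma DG_triple_step b a x :
  DG_triple b a x -> DG_triple (a + (1/2) *: br x b) b x.
Proof.
case=> ba aax bbx.
pose P := (1/4 : K) *: br b x; pose a0 := a - P.
have ba0 : br b a0 = 0 by rewrite /a0 /P; br_expand; rewrite ba bbx; lmod_eq K.
have bP : br b P = 4 *: x by rewrite /P brZr bbx; lmod_eq K.
have bx : br b x = 4 *: P by rewrite /P; lmod_eq K.
have -> : a + (1/2) *: br x b = a0 - P by rewrite (brC x) /a0 /P; lmod_eq K.
split => //.
- by rewrite brC brDr brNr ba0 bP; lmod_eq K.
- by apply: (DG_reflect ba0 bP bx); rewrite /a0 subrK.
Qed.

Section OnsagerSequence.
Context {A G : int -> V}.
Hypothesis G_def : forall m, G m = (1/4) *: br (A m) (A 0).
Hypothesis A_rec : forall m, A (m - 1) - A (m + 1) = (1/2) *: br (A m) (G 1).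

Lemma DG_triple_shift m :
  DG_triple (A 1) (A 0) (G 1) -> DG_triple (A (m + 1)) (A m) (G 1).
Proof.
move=> DG01; elim/int_ind_succ_pred: m => [//|m IH|m IH].
- have -> : A (m + 1 + 1) = A m + (1/2) *: br (G 1) (A (m + 1)).
    apply: (eq_lincomb (-1) (A_rec (m + 1))).
    by rewrite addrK (brC (G 1)); lmod_eq K.
  exact: DG_triple_step.
- rewrite subrK -[G 1]opprK; apply: DG_tripleN.
  have -> : A (m - 1) = A (m + 1) + (1/2) *: br (- G 1) (A m).
    apply: (eq_lincomb 1 (A_rec m)).
    by rewrite brNl (brC (G 1)); lmod_eq K.
  exact/DG_triple_step/DG_tripleN.
Qed.

Definition AA_rel (d : int) := forall m, br (A (m + d)) (A m) = 4 *: G d.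

Definition AG_rel (l : int) :=
  forall j, br (A j) (G l) = 2 *: A (j - l) - 2 *: A (j + l).

Lemma AG_rel1 : AG_rel 1.
Proof. by move=> j; apply: (eq_lincomb (-2) (A_rec j)); lmod_eq K. Qed.

Lemma AA_rel0 : AA_rel 0.
Proof. by move=> m; rewrite G_def addr0 !brxx !scaler0. Qed.

Lemma AG_rel0 : AG_rel 0.
Proof. by move=> j; rewrite G_def brxx scaler0 br0r !subr0 subrr. Qed.

Lemma G_opp {d} : AA_rel d -> G (- d) = - G d.
Proof.
move=> Rd; have := Rd (- d); rewrite addNr => Rd'.
by rewrite G_def brC Rd'; lmod_eq K.
Qed.

Lemma AA_relN {d} : AA_rel d -> AA_rel (- d).
Proof.
move=> Rd m; have := Rd (m - d); rewrite subrK => Rmd.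
by rewrite brC Rmd (G_opp Rd) scalerN.
Qed.

Lemma AG_relN {l} : AA_rel l -> AG_rel l -> AG_rel (- l).
Proof. by move=> Rl AGl j; rewrite (G_opp Rl) brNr AGl opprK; lmod_eq K. Qed.

Lemma AG_relS {l} : AA_rel 1 -> AA_rel l -> AA_rel (l + 1) -> AG_rel l -> AG_rel (l + 1).
Proof.
move=> R1 Rl Rl1 AGl j.
have Jac := br_derivation (A j) (A (j + l)) (A (j - 1)).
have e1 : br (A (j + l)) (A (j - 1)) = 4 *: G (l + 1).
  by rewrite -(Rl1 (j - 1)); congr (br (A _) _); ring.
have e2 : br (A j) (A (j + l)) = - (4 *: G l) by rewrite brC Rl.
have e3 : br (A j) (A (j - 1)) = 4 *: G 1 by rewrite -(R1 (j - 1)) subrK.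
rewrite e1 e2 e3 in Jac; move: Jac; br_expand.
rewrite (brC (G l)) AGl AG_rel1.
rewrite (_ : j - 1 - l = j - (l + 1)); last by ring.
rewrite (_ : j - 1 + l = j + l - 1); last by ring.
rewrite (_ : j + l + 1 = j + (l + 1)); last by ring.
by move=> Jac; apply: (eq_lincomb (1/4) Jac); lmod_eq K.
Qed.

Lemma AA_drift {n : nat} : AA_rel n -> AA_rel n.+1 ->
  forall m : int, br (A (m + 1 + n.+2)) (A (m + 1))
            = br (A (m + n.+2)) (A m) + 2 *: br (G 1) (G n.+1).
Proof.
move=> Rn Rn1 m.
have Jac := br_derivation (G 1) (A (m + n.+2)) (A (m + 1)).
have G1A k : br (G 1) (A k) = 2 *: A (k + 1) - 2 *: A (k - 1).
  by rewrite brC AG_rel1; lmod_eq K.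
have e1 : br (A (m + n.+2)) (A (m + 1)) = 4 *: G n.+1.
  by rewrite -(Rn1 (m + 1)); congr (br (A _) _); lia.
have e2 : br (A (m + n.+2 - 1)) (A (m + 1)) = 4 *: G n.
  by rewrite -(Rn (m + 1)); congr (br (A _) _); lia.
have e3 : br (A (m + n.+2)) (A (m + 1 + 1)) = 4 *: G n.
  by rewrite -(Rn (m + 1 + 1)); congr (br (A _) _); lia.
rewrite e1 !G1A in Jac; move: Jac; br_expand; rewrite e2 e3 addrK.
rewrite (_ : m + 1 + n.+2 = m + n.+2 + 1); last by lia.
by move=> Jac; apply: (eq_lincomb (-1/2) Jac); lmod_eq K.
Qed.

(* With f m := [A_(m+n+2), A_m], the Jacobi identity for A_1, A_0, G_(n+1) gives
   2 (f (-(n+1)) - f 0) = 4 [G_1, G_(n+1)], whereas by the drift the left-hand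
   side is -4 (n+1) [G_1, G_(n+1)]. *)
Lemma G1_commute {n : nat} : AA_rel n -> AA_rel n.+1 -> AG_rel n.+1 ->
  br (G 1) (G n.+1) = 0.
Proof.
move=> Rn Rn1 AGn1.
have f_neg := @int_seq_shift_neg _ (fun m => br (A (m + n.+2)) (A m)) _
  (AA_drift Rn Rn1) n.+1.
rewrite /= -scaler_nat in f_neg.
have Jac := br_derivation (A 1) (A 0) (G n.+1).
have e0 : br (A 1) (A 0) = 4 *: G 1 by rewrite G_def; lmod_eq K.
have e1 : br (A 1) (A (0 - n.+1%:Z)) = br (A (- n.+1%:Z + n.+2)) (A (- n.+1%:Z)).
  by congr (br (A _) (A _)); lia.
have e2 : br (A 1) (A (0 + n.+1%:Z)) = - (4 *: G n).
  by rewrite brC -(Rn 1); congr (- br (A _) _); lia.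
have e3 : br (A 0) (A (1 - n.+1%:Z)) = 4 *: G n.
  by rewrite -(Rn (1 - n.+1%:Z)); congr (br (A _) _); lia.
have e4 : br (A 0) (A (1 + n.+1%:Z)) = - br (A (0 + n.+2%:Z)) (A 0).
  by rewrite brC; congr (- br (A _) _); lia.
rewrite !AGn1 e0 in Jac; move: Jac; br_expand; rewrite e1 e2 e3 e4 f_neg => Jac.
apply: (@scale_natr_eq0 _ _ (4 * n + 7)); apply: (eq_lincomb (-1) Jac).
lmod_eq K.
Qed.

Lemma AA_rel_succ2 {n : nat} : AA_rel n -> AA_rel n.+1 -> AG_rel n.+1 -> AA_rel n.+2.
Proof.
move=> Rn Rn1 AGn1 m.
have fS (m' : int) : br (A (m' + 1 + n.+2)) (A (m' + 1)) = br (A (m' + n.+2)) (A m').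
  by rewrite AA_drift // G1_commute // scaler0 addr0.
rewrite (@int_seq_const _ (fun m => br (A (m + n.+2)) (A m)) fS m) /= add0r G_def.
lmod_eq K.
Qed.

Lemma AA_AG_rel_nat : AA_rel 1 -> forall n : nat, [/\ AA_rel n, AA_rel n.+1 & AG_rel n].
Proof.
move=> R1; elim=> [|n [Rn Rn1 AGn]]; first by split; [exact: AA_rel0 | exact: R1 | exact: AG_rel0].
have n1E : n.+1%:Z = n%:Z + 1 by rewrite -addn1 PoszD.
have AGn1 : AG_rel n.+1 by rewrite n1E; apply: AG_relS; rewrite -?n1E.
by split => //; apply: AA_rel_succ2.
Qed.

Lemma AA_rel_all : AA_rel 1 -> forall d, AA_rel d.
Proof.
move=> R1; case=> n; first by case: (AA_AG_rel_nat R1 n).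
by rewrite NegzE; apply: AA_relN; case: (AA_AG_rel_nat R1 n.+1).
Qed.

Lemma AG_rel_all : AA_rel 1 -> forall l, AG_rel l.
Proof.
move=> R1; case=> n; first by case: (AA_AG_rel_nat R1 n).
by rewrite NegzE; apply: AG_relN; case: (AA_AG_rel_nat R1 n.+1).
Qed.

Lemma AA_bracket : AA_rel 1 -> forall p q, br (A p) (A q) = 4 *: G (p - q).
Proof. by move=> R1 p q; rewrite -(AA_rel_all R1 (p - q) q) subrKC. Qed.

Lemma G_commute : AA_rel 1 -> forall m l, br (G m) (G l) = 0.
Proof.
move=> R1 m l.
have Jac := br_derivation (A m) (A 0) (G l).
rewrite !(AG_rel_all R1) in Jac; move: Jac; br_expand; rewrite !(AA_bracket R1).
rewrite !sub0r !add0r opprK subr0 brZl !(G_opp (AA_rel_all R1 _)).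
by move=> Jac; apply: (eq_lincomb (-1/4) Jac); lmod_eq K.
Qed.

Lemma DG_triple_of_DG :
  br (A 1) (br (A 1) (br (A 1) (A 0))) = 16 *: br (A 1) (A 0) ->
  br (A 0) (br (A 0) (br (A 0) (A 1))) = 16 *: br (A 0) (A 1) ->
  DG_triple (A 1) (A 0) (G 1).
Proof.
move=> DG1 DG0; rewrite /DG_triple !G_def; split; br_expand.
- by lmod_eq K.
- by rewrite (brC (A 1)) !brNr DG0; lmod_eq K.
- by rewrite DG1; lmod_eq K.
Qed.

Lemma onsager_of_DG :
  br (A 1) (br (A 1) (br (A 1) (A 0))) = 16 *: br (A 1) (A 0) ->
  br (A 0) (br (A 0) (br (A 0) (A 1))) = 16 *: br (A 0) (A 1) ->
  forall m l, [/\ br (A m) (A l) = 4 *: G (m - l),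
                  br (A m) (G l) = 2 *: A (m - l) - 2 *: A (m + l)
                & br (G m) (G l) = 0].
Proof.
move=> DG1 DG0.
have R1 : AA_rel 1.
  by move=> m; case: (DG_triple_shift m (DG_triple_of_DG DG1 DG0)).
by move=> m l; split; [exact: AA_bracket | exact: AG_rel_all | exact: G_commute].
Qed.

Lemma DG_of_onsager :
  (forall m l, [/\ br (A m) (A l) = 4 *: G (m - l),
                   br (A m) (G l) = 2 *: A (m - l) - 2 *: A (m + l)
                 & br (G m) (G l) = 0]) ->
  br (A 1) (br (A 1) (br (A 1) (A 0))) = 16 *: br (A 1) (A 0) /\
  br (A 0) (br (A 0) (br (A 0) (A 1))) = 16 *: br (A 0) (A 1).
Proof.
move=> onsager.
have AA p q : br (A p) (A q) = 4 *: G (p - q) by case: (onsager p q).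
have AG p q : br (A p) (G q) = 2 *: A (p - q) - 2 *: A (p + q) by case: (onsager p q).
have Gm1 : G (-1) = - G 1.
  have := brC (A 0) (A 1); rewrite !AA => h.
  by apply: (eq_lincomb (1/4) h); lmod_eq K.
by split; rewrite !AA brZr AG; br_expand; rewrite !AA;
  apply: (eq_lincomb (-32) Gm1); lmod_eq K.
Qed.

End OnsagerSequence.

End LieAlgebra.

Theorem theorem1 (R : realType) (V : lmodType R[i]) (br : V -> V -> V)
  (A : int -> V) :
  lie_bracket br ->
  (forall m : int,
     A (m - 1) - A (m + 1) = (1 / 2) *: br (A m) ((1 / 4) *: br (A 1) (A 0))) ->
  let G := fun m : int => (1 / 4 : R[i]) *: br (A m) (A 0) in
  (br (A 1) (br (A 1) (br (A 1) (A 0))) = 16 *: br (A 1) (A 0) /\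
   br (A 0) (br (A 0) (br (A 0) (A 1))) = 16 *: br (A 0) (A 1))
  <->
  (forall m l : int,
     [/\ br (A m) (A l) = 4 *: G (m - l),
         br (A m) (G l) = 2 *: A (m - l) - 2 *: A (m + l)
       & br (G m) (G l) = 0]).
Proof.
move=> Hbr A_rec G; have G_def m : G m = (1/4) *: br (A m) (A 0) by [].
split => [[DG1 DG0]|]; first exact: (onsager_of_DG Hbr G_def A_rec DG1 DG0).
move=> h; exact: (DG_of_onsager Hbr h).
Qed.
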